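(* Let $\mathcal{F}$ be a construction scheme over $\omega_1$ of a good type, let $\mathcal{A}_\mathcal{F}=\langle A_\alpha\rangle_{\alpha<\omega_1}$ be the AD family over $N$ defined below, and let $(X,\leq)$ be an $\omega_1$-like partial order. Then there are a bijection $\psi:X\to\omega_1$ and infinite sets $T_x\subseteq N$ ($x\in X$) such that $(\langle T_x\rangle_{x\in X},\langle A_{\psi(x)}\rangle_{x\in X})$ is an almost disjoint representation of $X$. In particular $\mathcal{A}_\mathcal{F}$ codes every $\omega_1$-like partial order.
   Context: A type is a sequence $\langle m_k,n_{k+1},r_{k+1}\rangle_{k\in\omega}$ of natural numbers with $m_0=1$ and, for all $k$, $n_{k+1}\geq2$, $m_k>r_{k+1}$, $m_{k+1}=r_{k+1}+(m_k-r_{k+1})n_{k+1}$; good if each $r\in\omega$ equals $r_k$ for infinitely many $k\geq1$. A construction scheme of type $\tau$ over a set of ordinals $Y$ is a family $\mathcal{F}$ of nonempty finite subsets of $Y$, cofinal among finite subsets of $Y$ under $\subseteq$, each of size $m_k$ for some $k$, such that with $\mathcal{F}_k=\{F\in\mathcal{F}:|F|=m_k\}$: (i) for $E,F\in\mathcal{F}_k$, $E\cap F$ is an initial segment of both; (ii) every $F\in\mathcal{F}_{k+1}$ equals $F_0\cup\dots\cup F_{n_{k+1}-1}$ with $F_i\in\mathcal{F}_k$ a $\Delta$-system with root $R(F)$, $|R(F)|=r_{k+1}$, $R(F)<F_0\setminus R(F)<\dots<F_{n_{k+1}-1}\setminus R(F)$ ($A<B$: every element of $A$ below every element of $B$). $\rho(\alpha,\beta)=\min\{k:\exists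 F\in\mathcal{F}_k\ \{\alpha,\beta\}\subseteq F\}$; $\lVert\alpha\rVert_k=|\{\xi<\alpha:\rho(\xi,\alpha)\leq k\}|$; for $k\geq1$, $\Xi_\alpha(k)=-1$ if $\alpha\in R(F)$ and $=i$ if $\alpha\in F_i\setminus R(F)$ for any $F\in\mathcal{F}_k$ containing $\alpha$. The family $\mathcal{A}_\mathcal{F}$: for $k\geq1$, $N_k=\{(\sigma,k):\sigma:n_k\to m_{k-1}\}$, $N=\bigcup_{k\geq1}N_k$, $A^k_\alpha=\{(\sigma,k)\in N_k:\Xi_\alpha(k)\geq0,\ \sigma(\Xi_\alpha(k))=\lVert\alpha\rVert_{k-1}\}$, $A_\alpha=\bigcup_{k\geq1}A^k_\alpha$. $A\subseteq^*B$ means $A\setminus B$ finite; $A=^*B$ means both inclusions mod finite. A partial order is $\omega_1$-like if well-founded, of size $\omega_1$, with every $(-\infty,x)$ countable. $\inf(x,y)$ is the greatest lower bound when it exists; $x,y$ incompatible means no $z\leq x,y$; $\mathrm{pred}(x)$ is the set of maximal elements of $(-\infty,x)$ and $x$ is successor-like if $\mathrm{pred}(x)$ is finite and every $y<x$ is $\leq$ some $z\in\mathrm{pred}(x)$. An almost disjoint representation of $X$ is a pair of indexed families $\langle T_x\rangle_{x\in X},\langle A_x\rangle_{x\in X}$ of infinite subsets of a countable set, $x\mapsto A_x$ injective and $\{A_x\}$ almost disjoint, such that: (a) $A_x\subseteq T_x$; (b) $y\not\leq x\Rightarrow A_y\subseteq^*T_y\setminus T_x$; (c) if $\inf(x,y)$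 exists, $T_x\cap T_y=^*T_{\inf(x,y)}$; (d) $x$ successor-like $\Rightarrow T_x\setminus\bigcup_{z\in\mathrm{pred}(x)}T_z=^*A_x$; (e) $x,y$ incompatible $\Rightarrow T_x\cap T_y=^*\emptyset$. *)

From HB Require Import structures.
From mathcomp Require Import all_boot.
From mathcomp Require Import boolp classical_sets cardinality.

Set Implicit Arguments.
Unset Strict Implicit.
Unset Printing Implicit Defensive.

Local Open Scope classical_set_scope.
Local Open Scope card_scope.

(* omega_1, presented as an abstract strict well-order (W, lt) which   *)
(* is uncountable and all of whose proper initial segments are         *)
(* countable; such an order is exactly (isomorphic to) omega_1.        *)
Definition omega1_order (W : Type) (lt : W -> W -> Prop) : Prop :=
  [/\ (forall a, ~ lt a a),
      (forall a b c, lt a b -> lt b c -> lt a c),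
      (forall a b, lt a b \/ a = b \/ lt b a) &
      well_founded lt] /\
  (forall a, countable [set x | lt x a]) /\
  ~ countable [set: W].

Definition has_size (T : Type) (A : set T) (c : nat) : Prop := A #= `I_c.

Definition setlt (W : Type) (lt : W -> W -> Prop) (A B : set W) : Prop :=
  forall a b, A a -> B b -> lt a b.

(* Types  <m_k, n_{k+1}, r_{k+1}>_k   (n 0 and r 0 are irrelevant).    *)
Definition is_type (m n r : nat -> nat) : Prop :=
  m 0 = 1 /\
  forall k, [/\ 2 <= n k.+1, r k.+1 < m k &
                m k.+1 = r k.+1 + (m k - r k.+1) * n k.+1].

Definition good_type (m n r : nat -> nat) : Prop :=
  is_type m n r /\
  forall r0 K, exists k, [/\ K <= k, 1 <= k & r k = r0].

Section Scheme.
Variables (W : Type) (lt : W -> W -> Prop) (m n r : nat -> nat)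
          (Fam : set (set W)).

Definition Fk (k : nat) (F : set W) : Prop := Fam F /\ has_size F (m k).

Definition init_seg (A B : set W) : Prop :=
  A `<=` B /\ forall x y, A x -> B y -> lt y x -> A y.

Definition decomposition (k : nat) (F : set W) (Fs : nat -> set W)
  (R : set W) : Prop :=
  [/\ (forall i, i < n k.+1 -> Fk k (Fs i)),
      F = \bigcup_(i in `I_(n k.+1)) Fs i,
      (forall i j, i < n k.+1 -> j < n k.+1 -> i <> j -> Fs i `&` Fs j = R),
      has_size R (r k.+1) &
      (0 < n k.+1 -> setlt lt R (Fs 0 `\` R))] /\
  (forall i, i.+1 < n k.+1 -> setlt lt (Fs i `\` R) (Fs i.+1 `\` R)).

Definition construction_scheme : Prop :=
  [/\ (forall F, Fam F -> F !=set0 /\ exists k, has_size F (m k)),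
      (forall A, finite_set A -> exists F, Fam F /\ A `<=` F),
      (forall k E F, Fk k E -> Fk k F ->
          init_seg (E `&` F) E /\ init_seg (E `&` F) F) &
      (forall k F, Fk k.+1 F -> exists Fs R, decomposition k F Fs R) ].

Definition rho_le (a b : W) (k : nat) : Prop :=
  exists j, j <= k /\ exists F, Fk j F /\ F a /\ F b.

Definition norm_is (a : W) (k c : nat) : Prop :=
  has_size [set x | lt x a /\ rho_le x a k] c.

(* Xi_a(k+1) = i  with  i >= 0 , i.e. a in F_i \ R(F) for F in F_{k+1} *)
Definition Xi_is (a : W) (k i : nat) : Prop :=
  exists F Fs R, [/\ Fk k.+1 F, F a, decomposition k F Fs R &
                     i < n k.+1] /\ Fs i a /\ ~ R a.

(* The countable set N = U_{k>=1} N_k, with (sigma, j.+1) in N_{j+1},  *)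
(* sigma : n_{j+1} -> m_j.                                              *)
Definition Nset := {j : nat & {ffun 'I_(n j.+1) -> 'I_(m j)}}.

Definition A_F (a : W) : set Nset :=
  [set p : Nset | let: existT j sigma := p in
           exists i (Hi : i < n j.+1),
             Xi_is a j i /\ norm_is a j (nat_of_ord (sigma (Ordinal Hi)))].

End Scheme.

Section PO.
Variables (X : Type) (le : X -> X -> Prop).

Definition partial_order : Prop :=
  [/\ (forall x, le x x),
      (forall x y, le x y -> le y x -> x = y) &
      (forall x y z, le x y -> le y z -> le x z)].

Definition ltX (x y : X) : Prop := le x y /\ x <> y.

Definition omega1_like (W : Type) : Prop :=
  [/\ partial_order,
      well_founded ltX,
      (exists f : X -> W, bijective f) &
      (forall x, countable [set y | ltX y x])].

Definition is_inf (x y z : X) : Prop :=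
  [/\ le z x, le z y & forall w, le w x -> le w y -> le w z].

Definition incompatible (x y : X) : Prop := ~ exists z, le z x /\ le z y.

Definition predX (x : X) : set X :=
  [set z | ltX z x /\ ~ exists w, ltX z w /\ ltX w x].

Definition successor_like (x : X) : Prop :=
  finite_set (predX x) /\
  forall y, ltX y x -> exists2 z, predX x z & le y z.

Definition subAE (T : Type) (A B : set T) : Prop := finite_set (A `\` B).
Definition eqAE (T : Type) (A B : set T) : Prop := subAE A B /\ subAE B A.

Definition ad_representation (N : Type) (T A : X -> set N) : Prop :=
  [/\ (forall x, infinite_set (T x) /\ infinite_set (A x)),
      (forall x y, A x = A y -> x = y),
      (forall x y, x <> y -> finite_set (A x `&` A y)) &
      (forall x, A x `<=` T x)] /\
  [/\ (forall x y, ~ le y x -> subAE (A y) (T y `\` T x)),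
      (forall x y z, is_inf x y z -> eqAE (T x `&` T y) (T z)),
      (forall x, successor_like x ->
          eqAE (T x `\` \bigcup_(z in predX x) T z) (A x)) &
      (forall x y, incompatible x y -> eqAE (T x `&` T y) set0) ].

End PO.

From Pilot Require Import Defs.
From HB Require Import structures.
From mathcomp Require Import all_boot finmap zify.
From mathcomp Require Import boolp classical_sets cardinality.

(* Take any bijection psi : X -> omega_1 and, for each x, an ordinal g x above
   psi of every y <= x (a countable set).  Writing N = U_j N_(j+1), put
     T_x = A_(psi x) u U_(u <= x) { p in A_(psi u) n N_(j+1) : rho(psi u, g x) <= j }.
   Two facts make every clause of an almost disjoint representation hold up to a
   finite set: for alpha <> beta, A_alpha and A_beta are disjoint inside N_(j+1)
   as soon as rho(alpha, beta) <= j (the two then have the same Xi-value at j+1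
   and distinct norms ||.||_j), and only finitely many j have rho(alpha, beta) > j.
   These are combined through rho(alpha, gamma) <= max(rho(alpha, beta),
   rho(beta, gamma)) for alpha < beta, a consequence of coherence.  Goodness of
   the type gives infinitely many levels with empty root, at which every ordinal
   has a nonnegative Xi-value, so each A_alpha is infinite. *)

Set Implicit Arguments. Unset Strict Implicit. Unset Printing Implicit Defensive.
Local Open Scope classical_set_scope.
Local Open Scope card_scope.

Definition fcard {T : Type} (A : set T) : nat :=
  #|` fset_set (A : set {classic T})|%fset.

Lemma has_sizeP T (A : set T) c : has_size A c <-> finite_set A /\ fcard A = c.
Proof.
split=> [sizeA|[finA <-]].
  by split; [exists c | exact: (@card_fset_set {classic T} A c sizeA)].
rewrite /has_size -[X in X #= _](@fset_setK {classic T} A) //.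
exact: (introT (@card_eq_fsetP {classic T} _ _) erefl).
Qed.

Lemma fcard0 T : fcard (@set0 T) = 0.
Proof. by rewrite /fcard (@fset_set0 {classic T}) cardfs0. Qed.

Lemma fcard1 T (x : T) : fcard [set x] = 1.
Proof. by rewrite /fcard (@fset_set1 {classic T}) cardfs1. Qed.

Lemma fcard_eq0 T (A : set T) : finite_set A -> fcard A = 0 -> A = set0.
Proof. by move=> finA /cardfs0_eq; apply: (@fset_set_set0 {classic T}). Qed.

Lemma fcard_le T (A B : set T) : finite_set B -> A `<=` B -> fcard A <= fcard B.
Proof.
move=> finB AB; have finA : finite_set A by apply: sub_finite_set finB.
by rewrite /fcard; apply: fsubset_leq_card; rewrite -(@fset_set_sub {classic T}).
Qed.

Lemma fcard_UI T (A B : set T) : finite_set A -> finite_set B ->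
  fcard (A `|` B) + fcard (A `&` B) = fcard A + fcard B.
Proof.
move=> finA finB.
by rewrite /fcard (@fset_setU {classic T}) // (@fset_setI {classic T}) // cardfsUI.
Qed.

Lemma fcard_lt T (A B : set T) x : finite_set B -> A `<=` B -> B x -> ~ A x ->
  fcard A < fcard B.
Proof.
move=> finB AB Bx Ax; have finA : finite_set A by apply: sub_finite_set finB.
have := fcard_UI finA (finite_set1 x).
have -> : A `&` [set x] = set0 by apply/seteqP; split=> y //= [Ay yx]; rewrite yx in Ay.
rewrite fcard0 fcard1 addn0 addn1 => <-.
by apply: fcard_le => // y [/AB //|->].
Qed.

Lemma finite_setU2 T (A B : set T) :
  finite_set A -> finite_set B -> finite_set (A `|` B).
Proof. by move=> finA finB; rewrite finite_setU. Qed.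

Lemma finite_set_ind T (P : set T -> Prop) : P set0 ->
  (forall A x, finite_set A -> P A -> P ([set x] `|` A)) ->
  forall A, finite_set A -> P A.
Proof.
move=> P0 PU A finA; have [c cA] : exists c, fcard A = c by eexists.
elim/ltn_ind: c A finA cA => c IH A finA cA.
have [->|/set0P [x Ax]] := eqVneq A set0; first by [].
have finAx : finite_set (A `\ x) by apply: finite_setD.
have -> : A = [set x] `|` (A `\ x).
  apply/seteqP; split=> [y Ay|y [->|[]] //].
  by have [->|yx] := pselect (y = x); [left | right].
apply: PU => //; apply: (IH (fcard (A `\ x))) => //.
by rewrite -cA; apply: (fcard_lt (x := x) finA) => // -[_ /(_ erefl)].
Qed.

Lemma finite_set_max W (lt : W -> W -> Prop) (A : set W) :
  (forall a b, lt a b \/ a = b \/ lt b a) ->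
  (forall a b c, lt a b -> lt b c -> lt a c) ->
  finite_set A -> A !=set0 -> exists2 x, A x & forall y, A y -> y = x \/ lt y x.
Proof.
move=> lt_tot lt_tr; move: A; apply: finite_set_ind => [[] //|A x _ IH _].
have [->|/set0P/IH [y Ay ymax]] := eqVneq A set0.
  by exists x => [|y [->|]]; [left | left |].
have [xy|[->|yx]] := lt_tot x y.
- by exists y => [|z [->|/ymax]]; [right | right |].
- by exists y => [|z [->|/ymax]]; [left | left |].
- exists x => [|z [->|/ymax [->|zy]]]; [left | left | right | right] => //.
  exact: lt_tr zy yx.
Qed.

Lemma finite_nat_bounded (A : set nat) : finite_set A -> exists K, forall x, A x -> x < K.
Proof.
move: A; apply: finite_set_ind => [|A x _ [K AK]]; first by exists 0.
by exists (maxn K x.+1) => y [->|/AK]; lia.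
Qed.

Lemma countable_setU T (A B : set T) : countable A -> countable B -> countable (A `|` B).
Proof.
move=> cA cB.
have -> : A `|` B = \bigcup_(b in [set: bool]) (if b then A else B).
  apply/seteqP; split=> [x [Ax|Bx]|x [[] _ ?]];
    [exists true | exists false | left | right] => //.
by apply: bigcup_countable => // -[].
Qed.

Lemma countable_strict_ubound W (lt : W -> W -> Prop) (S : set W) :
  (forall a b, lt a b \/ a = b \/ lt b a) ->
  (forall a, countable [set x | lt x a]) -> ~ countable [set: W] ->
  countable S -> exists g, forall a, S a -> lt a g.
Proof.
move=> lt_tot lt_countable W_uncountable cS.
apply: contrapT => noub; apply: W_uncountable.
have : [set: W] `<=` \bigcup_(a in S) ([set x | lt x a] `|` [set a]).
  move=> g _; apply: contrapT => notbelow; apply: noub; exists g => a Sa.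
  have [//|[ag|ga]] := lt_tot a g; exfalso; apply: notbelow; exists a => //.
    by right.
  by left.
move/subset_card_le/sub_countable; apply.
by apply: bigcup_countable => // a _; apply: countable_setU => //; apply: countable1.
Qed.

Section ConstructionScheme.
Variables (W : Type) (lt : W -> W -> Prop) (m n r : nat -> nat) (Fam : set (set W)).
Hypothesis lt_irr : forall a, ~ lt a a.
Hypothesis lt_tr : forall a b c, lt a b -> lt b c -> lt a c.
Hypothesis lt_tot : forall a b, lt a b \/ a = b \/ lt b a.
Hypothesis W_infinite : infinite_set [set: W].
Hypothesis type_mnr : is_type m n r.
Hypothesis scheme : construction_scheme lt m n r Fam.

Local Notation Fk := (Fk m Fam).
Local Notation dec := (decomposition lt m n r Fam).
Local Notation rho := (rho_le m Fam).

Lemma type_step k :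
  [/\ 2 <= n k.+1, r k.+1 < m k & m k.+1 = r k.+1 + (m k - r k.+1) * n k.+1].
Proof. by case: type_mnr => _ /(_ k). Qed.

Lemma m_lt_succ k : m k < m k.+1.
Proof.
case: (type_step k) => n2 rm ->.
have : (m k - r k.+1) * 2 <= (m k - r k.+1) * n k.+1 by rewrite leq_mul2l n2 orbT.
lia.
Qed.

Lemma m_leq j l : j <= l -> m j <= m l.
Proof.
elim: l => [|l IH]; first by rewrite leqn0 => /eqP ->.
rewrite leq_eqVlt => /orP [/eqP -> //|]; rewrite ltnS => /IH jl.
exact: leq_trans jl (ltnW (m_lt_succ l)).
Qed.

Lemma Fk_fcard k F : Fk k F -> finite_set F /\ fcard F = m k.
Proof. by case=> _ /has_sizeP. Qed.

Definition below (F : set W) (a : W) := [set x | F x /\ lt x a].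

Section Decomposition.
Variables (k : nat) (F : set W) (Fs : nat -> set W) (R : set W).
Hypothesis decF : dec k F Fs R.

Lemma dec_block i : i < n k.+1 -> Fk k (Fs i).
Proof. by case: decF => -[blocks _ _ _ _] _; apply: blocks. Qed.

Lemma dec_cover x : F x -> exists2 i, i < n k.+1 & Fs i x.
Proof. by case: decF => -[_ -> _ _ _] _ [i]; exists i. Qed.

Lemma dec_block_sub i : i < n k.+1 -> Fs i `<=` F.
Proof. by case: decF => -[_ -> _ _ _] _ ilt x Fsx; exists i. Qed.

Lemma dec_root_sub i : i < n k.+1 -> R `<=` Fs i.
Proof.
move=> ilt; case: decF => -[_ _ root _ _] _.
have [j jlt ij] : exists2 j, j < n k.+1 & i <> j.
  by case: (type_step k) => n2 _ _; case: i ilt => [|i] ilt; [exists 1 | exists 0]; lia.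
by rewrite -(root i j ilt jlt ij) => x [].
Qed.

Lemma dec_root_fcard : finite_set R /\ fcard R = r k.+1.
Proof. by case: decF => -[_ _ _ /has_sizeP sizeR _] _. Qed.

Lemma dec_finite : finite_set F.
Proof.
case: decF => -[_ -> _ _ _] _; apply: bigcup_finite => [|i ilt].
  exact: finite_II.
exact: (Fk_fcard (dec_block ilt)).1.
Qed.

Lemma dec_tail_nonempty i : i < n k.+1 -> exists y, Fs i y /\ ~ R y.
Proof.
move=> ilt; apply: contrapT => empty.
case: (Fk_fcard (dec_block ilt)) => finFs cFs; case: dec_root_fcard => finR cR.
have : fcard (Fs i) <= fcard R.
  by apply: fcard_le => // y Fsy; apply: contrapT => Ry; apply: empty; exists y.
by rewrite cFs cR; case: (type_step k) => _ rm _; lia.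
Qed.

Lemma dec_tail_lt_succ i x y : i.+1 < n k.+1 ->
  Fs i x -> ~ R x -> Fs i.+1 y -> ~ R y -> lt x y.
Proof. by move=> ilt Fsx Rx Fsy Ry; case: decF => _ /(_ i ilt); apply. Qed.

Lemma dec_tail_lt i j x y : i < j -> j < n k.+1 ->
  Fs i x -> ~ R x -> Fs j y -> ~ R y -> lt x y.
Proof.
elim: j y => [//|j IH] y ij jlt Fsx Rx Fsy Ry.
move: ij; rewrite ltnS leq_eqVlt => /orP [/eqP ij|ij].
  by subst i; apply: dec_tail_lt_succ Fsx Rx Fsy Ry.
have [z [Fsz Rz]] := dec_tail_nonempty (ltnW jlt).
apply: lt_tr (dec_tail_lt_succ jlt Fsz Rz Fsy Ry).
exact: IH (ltnW jlt) Fsx Rx Fsz Rz.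
Qed.

Lemma dec_root_lt i x y : i < n k.+1 -> R x -> Fs i y -> ~ R y -> lt x y.
Proof.
move=> ilt Rx Fsy Ry; have n0 : 0 < n k.+1 by lia.
case: decF => -[_ _ _ _ /(_ n0) rootlt] _.
case: i ilt Fsy Ry => [|i] ilt Fsy Ry; first by apply: rootlt.
have [z [Fsz Rz]] := dec_tail_nonempty n0.
exact: lt_tr (rootlt x z Rx (conj Fsz Rz)) (dec_tail_lt _ ilt Fsz Rz Fsy Ry).
Qed.

Definition dec_prefix i := [set x | R x \/ exists t, t < i /\ Fs t x].

Lemma dec_prefix_sub i : i <= n k.+1 -> dec_prefix i `<=` F.
Proof.
move=> ile x [Rx|[t [ti Fsx]]]; last exact: dec_block_sub (leq_trans ti ile) _ Fsx.
have n0 : 0 < n k.+1 by case: (type_step k); lia.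
exact: dec_block_sub n0 _ (dec_root_sub n0 Rx).
Qed.

Lemma dec_prefix_fcard i : i <= n k.+1 ->
  fcard (dec_prefix i) = r k.+1 + i * (m k - r k.+1).
Proof.
elim: i => [|i IH] ilt.
  have -> : dec_prefix 0 = R by apply/seteqP; split=> [x [//|[t []//]]|x Rx]; left.
  by case: dec_root_fcard => _ ->; rewrite mul0n addn0.
have prefixS : dec_prefix i.+1 = dec_prefix i `|` Fs i.
  apply/seteqP; split=> x.
    case=> [Rx|[t [+ Fsx]]]; first by left; left.
    by rewrite ltnS leq_eqVlt => /orP [/eqP <-|ti]; [right | left; right; exists t].
  case=> [[Rx|[t [ti Fsx]]]|Fsx]; [by left | right; exists t; split=> // | by right; exists i].
  exact: ltnW.
have prefix_meet : dec_prefix i `&` Fs i = R.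
  apply/seteqP; split=> [x [[//|[t [ti Fsx]]] Fsix]|x Rx].
    case: decF => -[_ _ root _ _] _.
    by rewrite -(root t i (ltn_trans ti ilt) ilt) //; move=> ti'; rewrite ti' ltnn in ti.
  by split; [left | apply: dec_root_sub ilt _ Rx].
have finP : finite_set (dec_prefix i).
  exact: sub_finite_set (dec_prefix_sub (ltnW ilt)) dec_finite.
have [finFs cFs] := Fk_fcard (dec_block ilt).
have := fcard_UI finP finFs; rewrite -prefixS prefix_meet IH ?(ltnW ilt) // cFs.
by case: dec_root_fcard => _ ->; case: (type_step k) => _ rm _; nia.
Qed.

Lemma dec_tail_position i a : i < n k.+1 -> Fs i a -> ~ R a ->
  r k.+1 + i * (m k - r k.+1) <= fcard (below F a) < r k.+1 + i.+1 * (m k - r k.+1).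
Proof.
move=> ilt Fsa Ra; have finB : finite_set (below F a).
  by apply: sub_finite_set dec_finite => x [].
apply/andP; split.
  rewrite -dec_prefix_fcard ?(ltnW ilt) //; apply: fcard_le => // x Px.
  split; first exact: dec_prefix_sub (ltnW ilt) _ Px.
  case: Px => [Rx|[t [ti Fsx]]]; first exact: dec_root_lt ilt Rx Fsa Ra.
  have [Rx|Rx] := pselect (R x); first exact: dec_root_lt ilt Rx Fsa Ra.
  exact: dec_tail_lt ti ilt Fsx Rx Fsa Ra.
rewrite -dec_prefix_fcard //; apply: (fcard_lt (x := a)).
- exact: sub_finite_set (dec_prefix_sub ilt) dec_finite.
- move=> x [Fx xa]; have [t tlt Fsx] := dec_cover Fx.
  have [Rx|Rx] := pselect (R x); first by left.
  right; exists t; split=> //; rewrite ltnS leqNgt; apply/negP => it.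
  exact: lt_irr (lt_tr xa (dec_tail_lt it tlt Fsa Ra Fsx Rx)).
- by right; exists i.
- by move=> [_ /lt_irr].
Qed.

Lemma dec_root_position a : R a -> fcard (below F a) < r k.+1.
Proof.
move=> Ra; case: dec_root_fcard => finR <-.
apply: (fcard_lt (x := a)) => //; last by move=> [_ /lt_irr].
move=> x [Fx xa]; have [t tlt Fsx] := dec_cover Fx.
apply: contrapT => Rx.
exact: lt_irr (lt_tr xa (dec_root_lt tlt Ra Fsx Rx)).
Qed.

End Decomposition.

Lemma Fk_down_closed k E F a x : Fk k E -> Fk k F -> E a -> F a -> E x -> lt x a -> F x.
Proof.
move=> FkE FkF Ea Fa Ex xa; case: scheme => _ _ coherent _.
have [[_ initE] _] := coherent k E F FkE FkF.
by case: (initE a x (conj Ea Fa) Ex xa).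
Qed.

Lemma below_Fk_eq k F G a : Fk k F -> Fk k G -> F a -> G a -> below F a = below G a.
Proof.
move=> FkF FkG Fa Ga; apply/seteqP; split=> x [Fx xa]; split=> //.
  exact: Fk_down_closed FkF FkG Fa Ga Fx xa.
exact: Fk_down_closed FkG FkF Ga Fa Fx xa.
Qed.

(* The number of elements of F below a determines the block of F containing a. *)
Lemma dec_index_unique k F Fs R G Gs R' i p a : Fk k.+1 F -> dec k F Fs R ->
  i < n k.+1 -> Fs i a -> ~ R a -> Fk k.+1 G -> dec k G Gs R' ->
  p < n k.+1 -> Gs p a -> i = p.
Proof.
move=> FkF decF ilt Fsa Ra FkG decG plt Gsa.
have below_eq := below_Fk_eq FkF FkG (dec_block_sub decF ilt Fsa) (dec_block_sub decG plt Gsa).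
have /andP [lo hi] := dec_tail_position decF ilt Fsa Ra.
case: (type_step k) => _ rm _.
have [R'a|R'a] := pselect (R' a).
  by have := dec_root_position decG R'a; rewrite -below_eq; lia.
have /andP [lo' hi'] := dec_tail_position decG plt Gsa R'a.
rewrite -below_eq in lo' hi'.
have [ip|pi|//] := ltngtP i p.
  have : i.+1 * (m k - r k.+1) <= p * (m k - r k.+1) by rewrite leq_mul2r ip orbT.
  lia.
have : p.+1 * (m k - r k.+1) <= i * (m k - r k.+1) by rewrite leq_mul2r pi orbT.
lia.
Qed.

Lemma Fk_succ_dec k F : Fk k.+1 F -> exists Fs R, dec k F Fs R.
Proof. by case: scheme => _ _ _; apply. Qed.

Lemma Fk_descend l H j x : Fk l H -> j < l -> H x ->
  exists Q Qs R i, [/\ Fk j.+1 Q, dec j Q Qs R, i < n j.+1, Qs i x & Q `<=` H].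
Proof.
elim: l H => [//|l IH] H FkH jl Hx.
have [Hs [R decH]] := Fk_succ_dec FkH.
have [t tlt Hsx] := dec_cover decH Hx.
move: jl; rewrite ltnS leq_eqVlt => /orP [/eqP jl|jl].
  by subst j; exists H, Hs, R, t; split.
have [Q [Qs [R' [i [FkQ decQ ilt Qsx QH]]]]] := IH _ (dec_block decH tlt) jl Hsx.
by exists Q, Qs, R', i; split=> // y /QH /(dec_block_sub decH tlt).
Qed.

(* A member H of the family containing E and a point outside E lies in some F_l
   with l > j; descending from H to level j+1 through blocks containing max E
   ends in a block containing max E, hence all of E by coherence. *)
Lemma Fk_lift_block j E : Fk j E ->
  exists Q Qs R i, [/\ Fk j.+1 Q, dec j Q Qs R, i < n j.+1 & E `<=` Qs i].
Proof.
move=> FkE; have [finE cE] := Fk_fcard FkE.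
have [y Ey] : exists y, ~ E y.
  apply: contrapT => full; apply: W_infinite; apply: sub_finite_set finE => y _.
  by apply: contrapT => Ey; apply: full; exists y.
case: scheme => sizes cofinal _ _.
have [H [FamH EyH]] := cofinal (E `|` [set y]) (finite_setU2 finE (finite_set1 y)).
have [_ [l sizeH]] := sizes H FamH.
have FkH : Fk l H by [].
have [finH cH] := Fk_fcard FkH.
have jl : j < l.
  rewrite ltnNge; apply/negP => lj.
  have := fcard_UI finE (finite_set1 y).
  have -> : E `&` [set y] = set0 by apply/seteqP; split=> z //= [Ez zy]; rewrite zy in Ez.
  rewrite fcard0 fcard1 addn0 cE => cEy.
  by have := fcard_le finH EyH; rewrite cEy cH; have := m_leq lj; lia.
have [e Ee emax] := finite_set_max lt_tot lt_tr finE (proj1 (sizes E FkE.1)).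
have [Q [Qs [R [i [FkQ decQ ilt Qse _]]]]] := Fk_descend FkH jl (EyH e (or_introl Ee)).
exists Q, Qs, R, i; split=> // z Ez.
have [-> //|ze] := emax z Ez.
exact: Fk_down_closed FkE (dec_block decQ ilt) Ee Qse Ez ze.
Qed.

Lemma Fk_lift j k E : Fk j E -> j <= k -> exists F, Fk k F /\ E `<=` F.
Proof.
move=> FkE; elim: k => [|k IH].
  by rewrite leqn0 => /eqP jk; subst j; exists E; split.
rewrite leq_eqVlt => /orP [/eqP jk|]; first by subst j; exists E; split.
rewrite ltnS => /IH [F [FkF EF]].
have [Q [Qs [R [i [FkQ decQ ilt FQs]]]]] := Fk_lift_block FkF.
by exists Q; split=> // x /EF /FQs /(dec_block_sub decQ ilt).
Qed.

Lemma Fk_exists a k : exists F, Fk k F /\ F a.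
Proof.
case: scheme => sizes cofinal _ _.
have [H [FamH aH]] := cofinal [set a] (finite_set1 a).
have [_ [l sizeH]] := sizes H FamH.
have FkH : Fk l H by [].
have Ha : H a by apply: aH.
have [kl|lk] := ltnP k l.
  have [Q [Qs [R [i [_ decQ ilt Qsa _]]]]] := Fk_descend FkH kl Ha.
  by exists (Qs i); split=> //; exact: (dec_block decQ ilt).
have [F [FkF HF]] := Fk_lift FkH lk.
by exists F; split=> //; apply: HF.
Qed.

Lemma rho_leP a b j : rho a b j <-> exists F, Fk j F /\ F a /\ F b.
Proof.
split=> [[j' [j'j [E [FkE [Ea Eb]]]]]|[F FP]]; last by exists j; split=> //; exists F.
have [F [FkF EF]] := Fk_lift FkE j'j.
by exists F; split=> //; split; apply: EF.
Qed.

Lemma rho_le_mono a b j k : rho a b j -> j <= k -> rho a b k.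
Proof. by move=> [j' [j'j FP]] jk; exists j'; split=> //; apply: leq_trans j'j jk. Qed.

Lemma rho_le_sym a b j : rho a b j -> rho b a j.
Proof. by move=> [j' [j'j [F [FkF [Fa Fb]]]]]; exists j'; split=> //; exists F. Qed.

Lemma rho_le_trans a c b j : lt a c -> rho a c j -> rho c b j -> rho a b j.
Proof.
move=> ac /rho_leP [F [FkF [Fa Fc]]] /rho_leP [G [FkG [Gc Gb]]].
apply/rho_leP; exists G; split=> //; split=> //.
exact: Fk_down_closed FkF FkG Fc Gc Fa ac.
Qed.

Lemma rho_le_exists a b : exists K, rho a b K.
Proof.
case: scheme => sizes cofinal _ _.
have [H [FamH abH]] := cofinal [set a; b] (finite_set2 a b).
have [_ [l sizeH]] := sizes H FamH.
by exists l; apply/rho_leP; exists H; split=> //; split; apply: abH; [left | right].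
Qed.

Definition normset a j := [set x | lt x a /\ rho x a j].

Lemma normset_sub a j F : Fk j F -> F a -> normset a j `<=` below F a.
Proof.
move=> FkF Fa x [xa /rho_leP [G [FkG [Gx Ga]]]]; split=> //.
exact: Fk_down_closed FkG FkF Ga Fa Gx xa.
Qed.

Lemma normset_finite a j : finite_set (normset a j).
Proof.
have [F [FkF Fa]] := Fk_exists a j.
apply: sub_finite_set (normset_sub FkF Fa) _.
by apply: sub_finite_set (Fk_fcard FkF).1 => x [].
Qed.

Lemma norm_isE a j c : norm_is lt m Fam a j c -> c = fcard (normset a j).
Proof. by move/has_sizeP => [_ <-]. Qed.

Lemma norm_is_exists a j : exists2 c, norm_is lt m Fam a j c & c < m j.
Proof.
exists (fcard (normset a j)); first by apply/has_sizeP; split=> //; apply: normset_finite.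
have [F [FkF Fa]] := Fk_exists a j.
have [finF <-] := Fk_fcard FkF.
apply: (fcard_lt (x := a)) => //; last by move=> [/lt_irr].
by move=> x /(normset_sub FkF Fa) [].
Qed.

Lemma normset_fcard_lt a b j : lt a b -> rho a b j ->
  fcard (normset a j) < fcard (normset b j).
Proof.
move=> ab rab; apply: (fcard_lt (x := a)) => //; first exact: normset_finite.
  by move=> x [xa rxa]; split; [apply: lt_tr xa ab | apply: rho_le_trans xa rxa rab].
by move=> [/lt_irr].
Qed.

Lemma Xi_is_rho_eq a b j i i' : rho a b j ->
  Xi_is lt m n r Fam a j i -> Xi_is lt m n r Fam b j i' -> i = i'.
Proof.
move=> /rho_leP [E [FkE [Ea Eb]]].
have [Q [Qs [R [p [FkQ decQ plt EQs]]]]] := Fk_lift_block FkE.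
move=> [F [Fs [R1 [[FkF Fa decF ilt] [Fsa R1a]]]]].
move=> [G [Gs [R2 [[FkG Gb decG i'lt] [Gsb R2b]]]]].
rewrite (dec_index_unique FkF decF ilt Fsa R1a FkQ decQ plt (EQs a Ea)).
by rewrite (dec_index_unique FkG decG i'lt Gsb R2b FkQ decQ plt (EQs b Eb)).
Qed.

Lemma A_F_level_disjoint a b j (s : {ffun 'I_(n j.+1) -> 'I_(m j)}) :
  a <> b -> rho a b j ->
  A_F lt r Fam a (existT _ j s) -> A_F lt r Fam b (existT _ j s) -> False.
Proof.
move=> ab rab [i [ilt [Xia Na]]] [i' [i'lt [Xib Nb]]].
have ii' := Xi_is_rho_eq rab Xia Xib; subst i'.
rewrite (_ : Ordinal ilt = Ordinal i'lt) in Na; last exact: val_inj.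
have Nab : fcard (normset a j) = fcard (normset b j) by rewrite -(norm_isE Na) -(norm_isE Nb).
have [lab|[//|lba]] := lt_tot a b.
  by have := normset_fcard_lt lab rab; rewrite Nab ltnn.
by have := normset_fcard_lt lba (rho_le_sym rab); rewrite Nab ltnn.
Qed.

Local Notation AF := (@A_F W lt m n r Fam).

Definition levels_below K := [set p : Nset m n | projT1 p < K].

Lemma levels_below_finite K : finite_set (levels_below K).
Proof.
pose level_set j := (fun s => existT (fun j => {ffun 'I_(n j.+1) -> 'I_(m j)}) j s)
  @` [set: {ffun 'I_(n j.+1) -> 'I_(m j)}].
have : levels_below K `<=` \bigcup_(j in `I_K) level_set j.
  by case=> j s /= jK; exists j => //; exists s.
move/sub_finite_set; apply; apply: bigcup_finite; first exact: finite_II.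
by move=> j _; apply: finite_image; apply: finite_finset.
Qed.

Definition rho_gt a b := [set p : Nset m n | ~ rho a b (projT1 p)].

Lemma rho_gt_finite a b : finite_set (rho_gt a b).
Proof.
have [K rK] := rho_le_exists a b.
apply: sub_finite_set (levels_below_finite K) => p rp.
by rewrite /levels_below /= ltnNge; apply/negP => Kp; apply: rp; apply: rho_le_mono rK Kp.
Qed.

Lemma A_F_meet_sub a b : a <> b -> AF a `&` AF b `<=` rho_gt a b.
Proof. by move=> ab [j s] [Aa Ab] /= rab; apply: A_F_level_disjoint ab rab Aa Ab. Qed.

Lemma A_F_infinite a : good_type m n r -> infinite_set (AF a).
Proof.
move=> [_ good] finA.
have [K levelsK] := finite_nat_bounded (finite_image (@projT1 _ _) finA).
have [[|j] [Kj _ r0]] := good 0 K.+1; first by [].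
have [F [FkF Fa]] := Fk_exists a j.+1.
have [Fs [R decF]] := Fk_succ_dec FkF.
have R0 : R = set0 by case: (dec_root_fcard decF) => finR cR; apply: fcard_eq0; rewrite ?cR.
have [i ilt Fsa] := dec_cover decF Fa.
have [c Nc clt] := norm_is_exists a j.
have : AF a (existT _ j [ffun=> Ordinal clt]).
  exists i, ilt; split; last by rewrite ffunE.
  by exists F, Fs, R; split; [split | split=> //; rewrite R0].
by move=> Aa; have := levelsK j (ex_intro2 _ _ _ Aa erefl); lia.
Qed.

Section Representation.
Variables (X : Type) (le : X -> X -> Prop) (psi g : X -> W).
Hypothesis le_po : partial_order le.
Hypothesis psi_inj : injective psi.
Hypothesis g_bound : forall x y, le y x -> lt (psi y) (g x).

Lemma le_refl x : le x x. Proof. by case: le_po. Qed.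
Lemma le_anti x y : le x y -> le y x -> x = y. Proof. by case: le_po => _ + _; apply. Qed.
Lemma le_trans x y z : le x y -> le y z -> le x z. Proof. by case: le_po => _ _; apply. Qed.

Definition Apsi x := AF (psi x).

Definition Tpsi x : set (Nset m n) :=
  Apsi x `|` [set p | exists2 u, le u x & Apsi u p /\ rho (psi u) (g x) (projT1 p)].

Lemma Apsi_sub_Tpsi x : Apsi x `<=` Tpsi x.
Proof. by move=> p Ap; left. Qed.

Lemma Apsi_meet_sub x y : x <> y -> Apsi x `&` Apsi y `<=` rho_gt (psi x) (psi y).
Proof. by move=> xy; apply: A_F_meet_sub => /psi_inj. Qed.

Lemma A_F_separated a c b p : a <> b -> lt a c -> AF a p -> AF b p ->
  rho a c (projT1 p) -> ~ rho c b (projT1 p).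
Proof.
case: p => j s ab ac Aa Ab rac rcb.
exact: A_F_level_disjoint ab (rho_le_trans ac rac rcb) Aa Ab.
Qed.

Lemma finite_Apsi_Tpsi x y : ~ le y x -> finite_set (Apsi y `&` Tpsi x).
Proof.
move=> yx; have xy : x <> y by move=> exy; apply: yx; rewrite exy; apply: le_refl.
apply: (sub_finite_set _ (finite_setU2 (rho_gt_finite (psi y) (psi x))
                                       (rho_gt_finite (g x) (psi y)))).
move=> p [Ay [Ax|[u ux [Au ru]]]].
  by left; exact: (Apsi_meet_sub (nesym xy) (conj Ay Ax)).
right=> rgy; apply: A_F_separated _ (g_bound ux) Au Ay ru rgy.
by move=> /psi_inj uy; apply: yx; rewrite -uy.
Qed.

Lemma finite_Tpsi_diff z x : le z x -> finite_set (Tpsi z `\` Tpsi x).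
Proof.
move=> zx.
apply: (sub_finite_set _ (finite_setU2 (rho_gt_finite (psi z) (g x))
                                       (rho_gt_finite (g z) (g x)))).
move=> p [[Az|[u uz [Au ru]]] notTx].
  by left=> rzx; apply: notTx; right; exists z.
right=> rzx; apply: notTx; right; exists u; first exact: le_trans uz zx.
by split=> //; apply: rho_le_trans (g_bound uz) ru rzx.
Qed.

Lemma Tpsi_meet_rho_gt x y u v p : u <> v -> le u x -> le v y ->
  Apsi u p -> rho (psi u) (g x) (projT1 p) ->
  Apsi v p -> rho (psi v) (g y) (projT1 p) -> rho_gt (g x) (g y) p.
Proof.
move=> uv ux vy Au ru Av rv rxy.
have rvx : rho (psi v) (g x) (projT1 p).
  exact: rho_le_trans (g_bound vy) rv (rho_le_sym rxy).
apply: A_F_separated _ (g_bound ux) Au Av ru (rho_le_sym rvx).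
by move=> /psi_inj.
Qed.

Lemma finite_Tpsi_inf_diff x y z : Defs.is_inf le x y z ->
  finite_set ((Tpsi x `&` Tpsi y) `\` Tpsi z).
Proof.
move=> [zx zy zmax].
have [xy|xy] := pselect (le x y).
  have <- : z = x by apply: le_anti zx (zmax x (le_refl x) xy).
  by apply: sub_finite_set (finite_set0 _) => p [[]].
have [yx|yx] := pselect (le y x).
  have <- : z = y by apply: le_anti zy (zmax y yx (le_refl y)).
  by apply: sub_finite_set (finite_set0 _) => p [[]].
apply: (sub_finite_set _ (finite_setU2
  (finite_setU2 (finite_Apsi_Tpsi xy) (finite_Apsi_Tpsi yx))
  (finite_setU2 (rho_gt_finite (g x) (g z)) (rho_gt_finite (g x) (g y))))).
move=> p [[Tx Ty] notTz].
case: Tx => [Ax|[u ux [Au ru]]]; first by left; left.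
case: Ty => [Ay|[v vy [Av rv]]]; first by left; right; split=> //; right; exists u.
have [uv|uv] := pselect (u = v); last first.
  by right; right; apply: Tpsi_meet_rho_gt uv ux vy Au ru Av rv.
subst v; right; left=> rxz; apply: notTz; right; exists u; first exact: zmax.
by split=> //; apply: rho_le_trans (g_bound ux) ru rxz.
Qed.

Lemma finite_Tpsi_incompatible x y : incompatible le x y -> finite_set (Tpsi x `&` Tpsi y).
Proof.
move=> xy.
have nxy : ~ le x y by move=> lxy; apply: xy; exists x; split=> //; apply: le_refl.
have nyx : ~ le y x by move=> lyx; apply: xy; exists y; split=> //; apply: le_refl.
apply: (sub_finite_set _ (finite_setU2
  (finite_setU2 (finite_Apsi_Tpsi nxy) (finite_Apsi_Tpsi nyx)) (rho_gt_finite (g x) (g y)))).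
move=> p [[Ax|[u ux [Au ru]]] Ty]; first by left; left.
case: Ty => [Ay|[v vy [Av rv]]]; first by left; right; split=> //; right; exists u.
have uv : u <> v by move=> uv; subst v; apply: xy; exists u.
by right; apply: Tpsi_meet_rho_gt uv ux vy Au ru Av rv.
Qed.

Lemma finite_Tpsi_succ_diff x : successor_like le x ->
  finite_set ((Tpsi x `\` \bigcup_(z in Defs.predX le x) Tpsi z) `\` Apsi x).
Proof.
move=> [finP predP].
apply: (sub_finite_set _ (bigcup_finite finP (fun z _ => rho_gt_finite (g x) (g z)))).
move=> p [[[Ax|[u ux [Au ru]]] notU] notAx]; first by [].
have [z Pz uz] : exists2 z, Defs.predX le x z & le u z.
  by apply: predP; split=> // ux'; apply: notAx; rewrite -ux'.
exists z => // rxz; apply: notU; exists z => //; right; exists u => //.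
by split=> //; apply: rho_le_trans (g_bound ux) ru rxz.
Qed.

Lemma finite_Apsi_succ_diff x : successor_like le x ->
  finite_set (Apsi x `\` (Tpsi x `\` \bigcup_(z in Defs.predX le x) Tpsi z)).
Proof.
move=> [finP _].
have finAT z : Defs.predX le x z -> finite_set (Apsi x `&` Tpsi z).
  by move=> [[zx nzx] _]; apply: finite_Apsi_Tpsi => xz; apply: nzx; apply: le_anti.
apply: (sub_finite_set _ (bigcup_finite finP finAT)) => p [Ax notD].
have [[z Pz Tz]|notU] := pselect ((\bigcup_(z in Defs.predX le x) Tpsi z) p).
  by exists z.
by exfalso; apply: notD; split=> //; left.
Qed.

Lemma ad_representation_Tpsi : good_type m n r -> ad_representation le Tpsi Apsi.
Proof.
move=> good.
have Ainf x : infinite_set (Apsi x) by apply: A_F_infinite.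
have AD x y : x <> y -> finite_set (Apsi x `&` Apsi y).
  by move=> xy; apply: sub_finite_set (Apsi_meet_sub xy) (rho_gt_finite _ _).
split; split.
- by move=> x; split=> // finT; apply: (Ainf x); apply: sub_finite_set (@Apsi_sub_Tpsi x) finT.
- move=> x y Axy; apply: contrapT => xy; apply: (Ainf x).
  by have := AD x y xy; rewrite Axy setIid.
- exact: AD.
- exact: Apsi_sub_Tpsi.
- move=> x y yx; apply: sub_finite_set (finite_Apsi_Tpsi yx) => p [Ay notD].
  split=> //; apply: contrapT => notTx; apply: notD; split=> //; exact: Apsi_sub_Tpsi.
- move=> x y z xyz; split; first exact: finite_Tpsi_inf_diff xyz.
  case: xyz => zx zy _.
  apply: sub_finite_set (finite_setU2 (finite_Tpsi_diff zx) (finite_Tpsi_diff zy)).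
  move=> p [Tz notI]; have [Tx|] := pselect (Tpsi x p); last by left.
  by have [Ty|] := pselect (Tpsi y p); [exfalso; apply: notI | right].
- by move=> x succx; split; [apply: finite_Tpsi_succ_diff | apply: finite_Apsi_succ_diff].
- move=> x y xy; split; last by apply: sub_finite_set (finite_set0 _) => p [].
  by apply: sub_finite_set (finite_Tpsi_incompatible xy) => p [].
Qed.

End Representation.
End ConstructionScheme.

Theorem mainTheorem12
  (W : Type) (lt : W -> W -> Prop) (m n r : nat -> nat) (Fam : set (set W))
  (X : Type) (le : X -> X -> Prop) :
  omega1_order lt ->
  good_type m n r ->
  @construction_scheme W lt m n r Fam ->
  omega1_like le W ->
  exists (psi : X -> W) (T : X -> set (Nset m n)),
    bijective psi /\
    ad_representation le T (fun x => @A_F W lt m n r Fam (psi x)).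
Proof.
move=> [[lt_irr lt_tr lt_tot _] [lt_countable W_uncountable]] good scheme
  [le_po _ [psi psi_bij] below_countable].
have W_infinite : infinite_set [set: W] by move=> /finite_set_countable.
have g_exists x : exists gx, forall y, le y x -> lt (psi y) gx.
  have down_countable : countable [set y | le y x].
    apply: sub_countable (subset_card_le _)
      (countable_setU (below_countable x) (countable1 x)).
    by move=> y yx; have [->|xy] := pselect (y = x); [right | left].
  have [gx gxP] := countable_strict_ubound lt_tot lt_countable W_uncountable
    (sub_countable (card_image_le psi _) down_countable).
  by exists gx => y yx; apply: gxP; exists y.
have [g g_bound] := choice g_exists.
exists psi, (Tpsi lt r Fam le psi g); split=> //.
exact: (ad_representation_Tpsi lt_irr lt_tr lt_tot W_infinite (proj1 good) scheme
          le_po (bij_inj psi_bij) g_bound good).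
Qed.
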